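(* Let $m>3$ and $t\ge 0$ be integers, and let $n=2(mt+1)$. Then the set $[n]=\{1,\dots,n\}$ admits no $m$-good partition.
   Context: For integers $n>0$ and $m>1$, a partition of $[n]=\{1,\dots,n\}$ into nonempty parts is called $m$-good if every part has at most $m$ elements and the sum of the elements of every part is a power of $m$, i.e. equals $m^s$ for some integer $s\ge 0$ (so $m^0=1$ is allowed). *)

From mathcomp Require Import all_boot.
Set Implicit Arguments. Unset Strict Implicit. Unset Printing Implicit Defensive.

(* [n] = {1,...,n} is encoded as 'I_n, where i : 'I_n represents the integer i+1. *)
Definition elt (n : nat) (i : 'I_n) : nat := i.+1.

Definition block_sum (n : nat) (B : {set 'I_n}) : nat := \sum_(i in B) elt i.

Definition is_power_of (m k : nat) : Prop := exists s : nat, k = m ^ s.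

Definition m_good (m n : nat) (P : {set {set 'I_n}}) : Prop :=
  partition P [set: 'I_n] /\
  forall B, B \in P -> #|B| <= m /\ is_power_of m (block_sum B).

From mathcomp Require Import all_boot.
From mathcomp Require Import zify.

Set Implicit Arguments.
Unset Strict Implicit.
Unset Printing Implicit Defensive.

(* A power of m is 1 or a multiple of m, and only the block containing 1 can
   have sum 1.  Hence the total 1 + ... + n of an m-good partition is 0 or 1
   modulo m, whereas for n = 2(mt+1) it is (mt+1)(2mt+3), which is 3 modulo m. *)

Lemma power_modn_le1 m k : is_power_of m k -> k %% m <= 1.
Proof.
case=> [[|s] ->]; first exact: leq_mod.
by rewrite expnS modnMr.
Qed.

Lemma power_gt1_dvdn m k : is_power_of m k -> 1 < k -> m %| k.
Proof. by case=> [[|s] ->] //; rewrite expnS dvdn_mulr. Qed.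

Lemma block_sum_gt1 n (B : {set 'I_n}) i : i \in B -> 0 < i -> 1 < block_sum B.
Proof.
move=> iB i_gt0; rewrite /block_sum (bigD1 i) //= /elt.
exact: leq_trans (leq_addr _ _).
Qed.

Lemma power_blocks_sum_modn_le1 m n (P : {set {set 'I_n}}) :
    partition P [set: 'I_n] ->
    (forall B, B \in P -> is_power_of m (block_sum B)) ->
  (\sum_(i < n) elt i) %% m <= 1.
Proof.
case: n P => [|n] P partP powP; first by rewrite big_ord0 mod0n.
have [coverP trivP] := (cover_partition partP, partition_trivIset partP).
have ord0_cover : ord0 \in cover P by rewrite coverP inE.
set B0 := pblock P ord0.
have B0P : B0 \in P by rewrite pblock_mem.
have dvd_rest : m %| \sum_(B in P | B != B0) block_sum B.
  apply: dvdn_sum => B /andP [BP neB0]; apply: (power_gt1_dvdn (powP B BP)).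
  have /set0Pn [i iB] : B != set0.
    by apply: contraTneq BP => ->; case/and3P: partP.
  have ord0_notin_B : ord0 \notin B.
    by apply: contra neB0 => ord0B; rewrite eq_sym -(def_pblock trivP BP ord0B).
  have i_neq0 : i != ord0 by apply: contraNneq ord0_notin_B => <-.
  by apply: (block_sum_gt1 iB); rewrite lt0n.
have -> : \sum_(i < n.+1) elt i = \sum_(i in [set: 'I_n.+1]) elt i.
  by apply: eq_bigl => i; rewrite inE.
rewrite (set_partition_big _ partP) (bigD1 B0) //= -modnDmr (eqP dvd_rest) addn0.
exact/power_modn_le1/powP.
Qed.

Lemma sum_elt n : \sum_(i < n) elt i = 'C(n.+1, 2).
Proof. by rewrite -bin2_sum big_nat_recl //= add0n big_mkord. Qed.

Lemma bin2_double_succ_modn m t : 'C((2 * (m * t + 1)).+1, 2) = 3 %[mod m].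
Proof.
set k := m * t + 1.
have -> : 'C((2 * k).+1, 2) = k * (2 * k).+1.
  by rewrite bin2odd mul2n /= ?odd_double // doubleK mulnC.
have -> : k * (2 * k).+1 = t * (2 * m * t + 5) * m + 3 by rewrite /k; nia.
by rewrite modnMDl.
Qed.

Theorem mainTheorem1 (m t : nat) (hm : 3 < m) :
  ~ exists P : {set {set 'I_(2 * (m * t + 1))}}, m_good m P.
Proof.
case=> P [partP goodP].
have := power_blocks_sum_modn_le1 partP (fun B BP => (goodP B BP).2).
by rewrite sum_elt bin2_double_succ_modn modn_small.
Qed.
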